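(* Let $(a_1,a_2)\in C$ and let $X$ be the AR(2)-process with coefficients $a_1,a_2$. Assume that $\mathbb{P}(Y_1<0)>0$ and that $\mathbb{P}(Y_1\ge x)\precsim(\log x)^{-\alpha}$ as $x\to\infty$ for some $\alpha>1$. Then for every $x\ge0$, $$\mathbb{P}\Big(\sup_{n\ge1}X_n\le x\Big)=\lim_{N\to\infty}p_N(x)>0 .$$
   Context: Let $(Y_n)_{n\ge1}$ be i.i.d. nondegenerate real random variables. The AR(2)-process is $X_n=a_1X_{n-1}+a_2X_{n-2}+Y_n$ for $n\ge1$ with $X_n=0$ for $n\le0$; $p_N(x):=\mathbb{P}(\sup_{n=1,\dots,N}X_n\le x)$. The region $C:=\{a_1\ge2,\ a_1^2+4a_2>0\}\cup\{a_1\in(0,2),\ a_1+a_2>1\}\cup\{a_1^2+4a_2=0,\ a_1>2\}\cup\{a_1=0,\ a_2>1\}$. $f\precsim g$ means $\limsup f/g<\infty$. *)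

From HB Require Import structures.
From mathcomp Require Import all_boot all_order all_algebra.
From mathcomp Require Import all_classical all_reals all_analysis.
Set Implicit Arguments. Unset Strict Implicit. Unset Printing Implicit Defensive.
Import Order.TTheory GRing.Theory Num.Theory.
Local Open Scope classical_set_scope.
Local Open Scope ring_scope.

(* Convention: Y k (k : nat, starting at 0) is the paper's Y_{k+1}. *)

Definition mutually_independent_rvs d (T : measurableType d) (R : realType)
  (P : probability T R) (Y : nat -> T -> R) : Prop :=
  forall (s : seq nat) (B : nat -> set R), uniq s ->
    (forall i, measurable (B i)) ->
    P [set t | forall i, i \in s -> B i (Y i t)] =
    (\big[*%E/1%E]_(i <- s) P (Y i @^-1` B i))%E.

Definition identically_distributed d (T : measurableType d) (R : realType)
  (P : probability T R) (Y : nat -> T -> R) : Prop :=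
  forall (n : nat) (B : set R), measurable B ->
    P (Y n @^-1` B) = P (Y 0%N @^-1` B).

Definition iid_rvs d (T : measurableType d) (R : realType)
  (P : probability T R) (Y : nat -> T -> R) : Prop :=
  (forall n, measurable_fun setT (Y n)) /\
  mutually_independent_rvs P Y /\ identically_distributed P Y.

Definition nondegenerate_rv d (T : measurableType d) (R : realType)
  (P : probability T R) (Z : T -> R) : Prop :=
  forall c : R, (P (Z @^-1` [set c]) < 1)%E.

(* AR(2) process: ar2 a1 a2 Y n = X_n, with X_0 = 0 (and X_{-1} = 0),
   X_1 = Y_1, X_{n+2} = a1 X_{n+1} + a2 X_n + Y_{n+2}. *)
Fixpoint ar2_aux (R : realType) (a1 a2 : R) (Y : nat -> R) (n : nat) : R * R :=
  (* returns (X_n, X_{n+1}) *)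
  match n with
  | 0%N => (0, Y 0%N)
  | n'.+1 => let p := ar2_aux a1 a2 Y n' in
             (p.2, a1 * p.2 + a2 * p.1 + Y n'.+1)
  end.

Definition ar2 (R : realType) (a1 a2 : R) (Y : nat -> R) (n : nat) : R :=
  (ar2_aux a1 a2 Y n).1.

Definition region_C (R : realType) (a1 a2 : R) : Prop :=
  (2 <= a1 /\ 0 < a1 ^+ 2 + 4 * a2) \/
  (0 < a1 < 2 /\ 1 < a1 + a2) \/
  (a1 ^+ 2 + 4 * a2 = 0 /\ 2 < a1) \/
  (a1 = 0 /\ 1 < a2).

Definition pN d (T : measurableType d) (R : realType) (P : probability T R)
  (a1 a2 : R) (Y : nat -> T -> R) (N : nat) (x : R) : \bar R :=
  P [set t | forall n : nat, (1 <= n <= N)%N -> ar2 a1 a2 (Y ^~ t) n <= x].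

(* Pick d > 0 with P(Y_1 <= -d) > 0. For (a1, a2) in C either both
   coefficients are nonnegative with a1 + a2 > 1, or the characteristic roots
   are real with r1 > 1 and r2 >= 0. In both cases the path X stays <= 0 as
   long as Y_1, Y_2 <= -d and the later innovations Y_{k+1} stay below a
   geometric barrier b_k = eta th^(k+1) with 1 < th: the negative start is amplified
   at a rate exceeding th. By independence this event has probability
   prod_k P(Y_1 <= b_k), and the logarithmic tail bound with alpha > 1 gives
   P(Y_1 > eta th^(k+1)) = O(k^(-alpha)), which is summable, so the infinite
   product is positive. The limit is continuity of P along the decreasing
   events {max_(n <= N) X_n <= x}. *)

From HB Require Import structures.
From mathcomp Require Import all_boot all_order all_algebra.
From mathcomp Require Import all_classical all_reals all_analysis.
From mathcomp Require Import ring lra.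
Import Order.TTheory GRing.Theory Num.Theory.
Local Open Scope classical_set_scope.
Local Open Scope ring_scope.

Set Implicit Arguments.
Unset Strict Implicit.
Unset Printing Implicit Defensive.

Section AR2Envelope.
Variable R : realType.
Implicit Types (d eta th : R) (y : nat -> R).

Lemma ar2_0 (a1 a2 : R) y : ar2 a1 a2 y 0 = 0. Proof. by []. Qed.

Lemma ar2_1 (a1 a2 : R) y : ar2 a1 a2 y 1 = y 0%N. Proof. by []. Qed.

Lemma ar2SS (a1 a2 : R) y n :
  ar2 a1 a2 y n.+2 = a1 * ar2 a1 a2 y n.+1 + a2 * ar2 a1 a2 y n + y n.+1.
Proof. by []. Qed.

(* Barrier for the innovations under which the AR(2) path stays nonpositive. *)
Definition ar2_envelope d eta th (k : nat) : R :=
  if (k < 2)%N then - d else eta * th ^+ k.+1.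

Lemma ar2_envelope_ge d eta th k : 0 <= d -> 0 < eta -> 0 < th ->
  - d <= ar2_envelope d eta th k.
Proof.
move=> d0 eta0 th0; rewrite /ar2_envelope; case: ifP => // _.
have : 0 < eta * th ^+ k.+1 by rewrite mulr_gt0 // exprn_gt0.
lra.
Qed.

Lemma exists_gt1_sqr_lt (a1 a2 : R) : 0 <= a1 -> 1 < a1 + a2 ->
  exists2 th, 1 < th & th ^+ 2 < a1 * th + a2.
Proof.
(* For t <= 1, a1 (1 + t) + a2 - (1 + t)^2 = s + (a1 - 2) t - t^2 >= s - 3 t. *)
move=> a10 s1; set s := a1 + a2 - 1.
have s0 : 0 < s by rewrite /s; lra.
set t := s / (3 + s).
have t0 : 0 < t by rewrite /t divr_gt0 //; lra.
have t1 : t <= 1 by rewrite /t ler_pdivrMr; lra.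
have t3 : 3 * t < s by rewrite /t mulrA ltr_pdivrMr; nra.
exists (1 + t); first lra.
rewrite expr2; rewrite /s in t3; nra.
Qed.

Lemma ar2_le0_nonneg_coef (a1 a2 : R) d : 0 <= a1 -> 0 <= a2 -> 1 < a1 + a2 ->
  0 < d -> exists eta th, [/\ 0 < eta, 1 < th & forall y,
    (forall k, y k <= ar2_envelope d eta th k) ->
    forall n, (0 < n)%N -> ar2 a1 a2 y n <= 0].
Proof.
move=> a10 a20 s1 d0.
have [th th1 hth] := exists_gt1_sqr_lt a10 s1.
set g := a1 * th + a2 - th ^+ 2.
have g0 : 0 < g by rewrite /g; lra.
have th0 : 0 < th by lra.
set k := d / th ^+ 2.
have k0 : 0 < k by rewrite /k divr_gt0 // exprn_gt0.
have kth2 : k * th ^+ 2 = d by rewrite /k divfK // expf_neq0 // gt_eqF.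
exists (k * g / th ^+ 2), th; split => //.
  by apply: divr_gt0; [exact: mulr_gt0 | exact: exprn_gt0].
move=> y yenv.
(* X_{n+1} <= - k th^{n+1} and X_{n+2} <= - k th^{n+2}: the innovation of size
   k g th^{n+1} is absorbed by the slack [g] of [th] in the recursion. *)
have geom n : ar2 a1 a2 y n.+1 <= - k * th ^+ n.+1 /\
              ar2 a1 a2 y n.+2 <= - k * th ^+ n.+2.
  elim: n => [|n [IH1 IH2]].
    have y0 : y 0%N <= - d by exact: yenv 0%N.
    have y1 : y 1%N <= - d by exact: yenv 1%N.
    rewrite ar2SS ar2_1 ar2_0 !mulNr kth2; split.
      have : k * th ^+ 1 <= k * th ^+ 2 by rewrite ler_pM2l // ler_eXn2l.
      lra.
    have : a1 * y 0%N <= 0 by nra.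
    lra.
  split => //; rewrite ar2SS.
  have yn : y n.+2 <= k * g / th ^+ 2 * th ^+ n.+3 by exact: yenv n.+2.
  set Q := th ^+ n.+1 in IH1 IH2 yn *.
  have Q0 : 0 < Q by rewrite /Q exprn_gt0.
  rewrite (exprS _ n.+1) -/Q in IH2.
  rewrite !(exprS _ n.+2) !(exprS _ n.+1) -/Q in yn *.
  have eyn : k * g / th ^+ 2 * (th * (th * Q)) = k * g * Q.
    by field; rewrite gt_eqF.
  rewrite eyn in yn.
  have : a1 * ar2 a1 a2 y n.+2 <= a1 * (- k * (th * Q)) by rewrite ler_wpM2l.
  have : a2 * ar2 a1 a2 y n.+1 <= a2 * (- k * Q) by rewrite ler_wpM2l.
  have : - k * (th * (th * Q)) =
         a1 * (- k * (th * Q)) + a2 * (- k * Q) + k * g * Q.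
    by rewrite /g; ring.
  lra.
case=> // n _; have [+ _] := geom n.
have : 0 < k * th ^+ n.+1 by rewrite mulr_gt0 // exprn_gt0.
lra.
Qed.

Lemma ar2_le0_real_roots r1 r2 d : 1 < r1 -> 0 <= r2 -> 0 < d ->
  exists eta th, [/\ 0 < eta, 1 < th & forall y,
    (forall k, y k <= ar2_envelope d eta th k) ->
    forall n, (0 < n)%N -> ar2 (r1 + r2) (- (r1 * r2)) y n <= 0].
Proof.
move=> r11 r20 d0.
set th := (1 + r1) / 2.
have th1 : 1 < th by rewrite /th; lra.
have thr1 : th < r1 by rewrite /th; lra.
have th0 : 0 < th by lra.
set k := d / th.
have k0 : 0 < k by rewrite /k divr_gt0.
have kth : k * th = d by rewrite /k divfK // gt_eqF.
exists (k * (r1 - th) / th), th; split => //.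
  by apply: divr_gt0 => //; apply: mulr_gt0 => //; lra.
move=> y yenv.
have ybound m : y m.+1 <= k * th ^+ m.+1 * (r1 - th).
  case: m => [|m].
    have : y 1%N <= - d by exact: yenv 1%N.
    have : 0 < k * th ^+ 1 * (r1 - th).
      by apply: mulr_gt0; [rewrite mulr_gt0 // exprn_gt0 | lra].
    lra.
  have : y m.+2 <= k * (r1 - th) / th * th ^+ m.+3 by exact: yenv m.+2.
  suff -> : k * (r1 - th) / th * th ^+ m.+3 = k * th ^+ m.+2 * (r1 - th) by [].
  by rewrite (exprS _ m.+2); field; rewrite gt_eqF.
set X := ar2 (r1 + r2) (- (r1 * r2)) y.
(* [X n.+1 - r2 * X n] solves the first-order recursion with root [r1 > th]. *)
have geom n : X n.+1 <= 0 /\ X n.+1 - r2 * X n <= - k * th ^+ n.+1.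
  elim: n => [|n [IH1 IH2]].
    have y0 : y 0%N <= - d by exact: yenv 0%N.
    rewrite /X ar2_1 ar2_0 expr1 mulNr kth; lra.
  have rec : X n.+2 - r2 * X n.+1 = r1 * (X n.+1 - r2 * X n) + y n.+1.
    by rewrite /X ar2SS; ring.
  set Q := th ^+ n.+1 in IH2 *.
  have Q0 : 0 < Q by rewrite /Q exprn_gt0.
  have yn := ybound n; rewrite -/Q in yn.
  have hZ : r1 * (X n.+1 - r2 * X n) <= r1 * (- k * Q).
    by rewrite ler_wpM2l //; lra.
  have step : X n.+2 - r2 * X n.+1 <= - k * th ^+ n.+2.
    have : - k * th ^+ n.+2 = r1 * (- k * Q) + k * Q * (r1 - th).
      by rewrite exprS /Q; ring.
    lra.
  split => //.
  have : r2 * X n.+1 <= 0 by nra.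
  have : 0 < k * th ^+ n.+2 by rewrite mulr_gt0 // exprn_gt0.
  lra.
by case=> // n _; have [] := geom n.
Qed.

Lemma ar2_le0_region_C (a1 a2 d : R) : region_C a1 a2 -> 0 < d ->
  exists eta th, [/\ 0 < eta, 1 < th & forall y,
    (forall k, y k <= ar2_envelope d eta th k) ->
    forall n, (0 < n)%N -> ar2 a1 a2 y n <= 0].
Proof.
move=> hC d0.
have a10 : 0 <= a1 by case: hC => [[]|[[/andP[]]|[[]|[]]]] => *; lra.
have [a20|a20] := leP 0 a2.
  by apply: ar2_le0_nonneg_coef => //; case: hC => [[]|[[]|[[]|[]]]] => *; lra.
(* With a2 < 0 the characteristic roots are real: r1 > 1 and r2 >= 0. *)
set D := a1 ^+ 2 + 4 * a2.
have D0 : 0 <= D.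
  by rewrite /D; case: hC => [[]|[[/andP[] ]|[[]|[]]]] => *; rewrite ?expr2; nra.
set sq := Num.sqrt D.
have sq0 : 0 <= sq by rewrite sqrtr_ge0.
have sq2 : sq * sq = D by rewrite -expr2 sqr_sqrtr.
set r1 := (a1 + sq) / 2; set r2 := (a1 - sq) / 2.
have r20 : 0 <= r2.
  have : sq * sq <= a1 * a1 by rewrite sq2 /D expr2; lra.
  rewrite /r2; nra.
have r11 : 1 < r1.
  rewrite /r1; rewrite /D expr2 in sq2.
  case: hC => [[h1 h2]|[[/andP[h1 h2] h]|[[h1 h2]|[_ h]]]]; try lra.
    have : 0 < sq by rewrite /sq sqrtr_gt0 /D.
    lra.
  have : 2 - a1 < sq by nra.
  lra.
have -> : a1 = r1 + r2 by rewrite /r1 /r2; field.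
have -> : a2 = - (r1 * r2).
  rewrite /r1 /r2.
  have -> : (a1 + sq) / 2 * ((a1 - sq) / 2) = (a1 * a1 - sq * sq) / 4 by field.
  by rewrite sq2 /D; field.
exact: ar2_le0_real_roots.
Qed.

End AR2Envelope.

Section TailSums.
Variable R : realType.

Lemma powR_telescope_step (b u : R) : 0 < b -> 1 < u ->
  b * u `^ (- (1 + b)) <= (u - 1) `^ (- b) - u `^ (- b).
Proof.
move=> b0 u1; have u0 : 0 < u by lra.
have hln : u^-1 <= ln u - ln (u - 1).
  have -> : u - 1 = u * (1 + - u^-1) by field; rewrite gt_eqF.
  have iu : - u^-1 > -1 by rewrite ltrN2 invf_lt1.
  rewrite lnM ?posrE //; last lra.
  have := le_ln1Dx iu; lra.
rewrite /powR !gt_eqF //; last lra.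
have -> : - b * ln (u - 1) = - b * ln u + b * (ln u - ln (u - 1)) by ring.
have -> : - (1 + b) * ln u = - b * ln u + - ln u by ring.
rewrite !expRD expRN lnK ?posrE //.
have E0 := expR_gt0 (- b * ln u); set E := expR (- b * ln u) in E0 *.
have := expR_ge1Dx (b * (ln u - ln (u - 1))).
have : E * (b * u^-1) <= E * (b * (ln u - ln (u - 1))).
  by rewrite ler_wpM2l ?ler_wpM2l //; lra.
nra.
Qed.

Lemma sum_powR_le (b : R) (K n : nat) : 0 < b -> (1 < K)%N ->
  \sum_(K <= k < n) b * k%:R `^ (- (1 + b)) <= K.-1%:R `^ (- b).
Proof.
move=> b0 K1.
have tele m : \sum_(K <= k < K + m) b * k%:R `^ (- (1 + b)) <=
              K.-1%:R `^ (- b) - (K + m).-1%:R `^ (- b).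
  elim: m => [|m IH]; first by rewrite addn0 big_geq // subrr.
  rewrite addnS big_nat_recr ?leq_addr //=.
  have u1 : 1 < (K + m)%:R :> R by rewrite ltr1n; apply: leq_trans (leq_addr _ _).
  have := powR_telescope_step b0 u1.
  have e : (K + m).-1%:R = (K + m)%:R - 1 :> R.
    have Km0 : (0 < K + m)%N by rewrite addn_gt0 (ltnW K1).
    by rewrite -{2}(prednK Km0) -natr1 addrK.
  rewrite e in IH; lra.
have [nK|Kn] := leqP n K; first by rewrite big_geq // powR_ge0.
rewrite -(subnKC (ltnW Kn)).
have := tele (n - K)%N; have := powR_ge0 (K + (n - K)).-1%:R (- b); lra.
Qed.

Lemma tail_sum_powR_small (C al eps : R) : 0 <= C -> 1 < al -> 0 < eps ->
  exists K0, forall K N, (K0 <= K)%N ->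
    \sum_(K <= k < N) C * k%:R `^ (- al) <= eps.
Proof.
move=> C0 al1 eps0; set b := al - 1.
have b0 : 0 < b by rewrite /b; lra.
set w := eps * b / (C + 1).
have w0 : 0 < w by rewrite /w divr_gt0 ?mulr_gt0 //; lra.
set z := w `^ (- b^-1).
have z0 : 0 < z by exact: powR_gt0.
have zw : z `^ (- b) = w.
  by rewrite /z -powRrM mulrNN mulVf ?gt_eqF // powRr1 // ltW.
exists (Num.truncn z).+2 => K N hK.
have K1 : (1 < K)%N by apply: leq_trans hK.
have hm : z < K.-1%:R.
  apply: (lt_le_trans (truncnS_gt z)); rewrite ler_nat -ltnS prednK //.
  exact: ltnW.
have decr : K.-1%:R `^ (- b) <= z `^ (- b).
  rewrite !powRN lef_pV2 ?posrE ?powR_gt0 //; last exact: lt_trans hm.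
  by apply: ge0_ler_powR; rewrite ?nnegrE; lra.
have -> : \sum_(K <= k < N) C * k%:R `^ (- al) =
          C / b * \sum_(K <= k < N) b * k%:R `^ (- (1 + b)).
  rewrite mulr_sumr; apply: eq_bigr => k _.
  by rewrite (_ : 1 + b = al) ?mulrA ?divfK ?gt_eqF // /b; ring.
have Cb0 : 0 <= C / b by rewrite divr_ge0 //; lra.
have := ler_wpM2l Cb0 (le_trans (sum_powR_le N b0 K1) decr).
have : C / b * z `^ (- b) = eps * (C / (C + 1)).
  by rewrite zw /w; field; rewrite ?gt_eqF //; lra.
have : eps * (C / (C + 1)) <= eps.
  by apply: ler_piMr; [lra | rewrite ler_pdivrMr; lra].
lra.
Qed.

Lemma ln_geometric_ge (eta th A : R) : 0 < eta -> 1 < th ->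
  exists K0, forall k, (K0 <= k)%N ->
    A + k%:R * (ln th / 2) <= ln (eta * th ^+ k.+1).
Proof.
move=> eta0 th1; set L := ln th.
have L0 : 0 < L by rewrite /L ln_gt0.
exists (Num.truncn (2 * (`|ln eta| + `|A|) / L)) => k hk.
have hK : 2 * (`|ln eta| + `|A|) / L < k.+1%:R.
  by apply: (lt_le_trans (truncnS_gt _)); rewrite ler_nat ltnS.
rewrite ltr_pdivrMr // in hK.
rewrite lnM ?posrE ?exprn_gt0 //; last lra.
rewrite lnXn; last lra.
have e : k.+1%:R = k%:R + 1 :> R by rewrite -natr1.
rewrite -/L -mulr_natr e in hK *.
have := ler_norm A; have := ler_norm (- ln eta); rewrite normrN.
nra.
Qed.

Lemma tail_sum_log_small (eta th M x0 al : R) (K0 : nat) (q : nat -> R) :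
  0 < eta -> 1 < th -> 1 < al ->
  (forall k, (K0 <= k)%N -> x0 <= eta * th ^+ k.+1 ->
     q k <= M * ln (eta * th ^+ k.+1) `^ (- al)) ->
  exists2 K, (K0 <= K)%N & forall N, \sum_(K <= k < N) q k <= 2^-1.
Proof.
move=> eta0 th1 al1 hq; set L := ln th.
have L0 : 0 < L by rewrite /L ln_gt0.
have [K1 hK1] := ln_geometric_ge (ln (`|x0| + 1)) eta0 th1.
set C := `|M| * (L / 2) `^ (- al).
have C0 : 0 <= C by rewrite mulr_ge0 ?powR_ge0.
have half0 : 0 < 2^-1 :> R by rewrite invr_gt0.
have [K2 hK2] := tail_sum_powR_small C0 al1 half0.
set K := maxn K0 (maxn K1 (maxn K2 1)).
have [K0K K1K K2K K_gt0] : [/\ K0 <= K, K1 <= K, K2 <= K & 0 < K]%N.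
  by rewrite /K !leq_max !leqnn !orbT.
exists K => // N.
apply: le_trans _ (hK2 K N K2K); apply: ler_sum_nat => k /andP[Kk _].
have kL := hK1 k (leq_trans K1K Kk); rewrite -/L in kL.
set bk := eta * th ^+ k.+1 in kL *.
have bk0 : 0 < bk by rewrite mulr_gt0 // exprn_gt0 //; lra.
have kL0 : 0 < k%:R * (L / 2).
  by rewrite mulr_gt0 ?divr_gt0 // ltr0n (leq_trans K_gt0).
have lx0 : 0 <= ln (`|x0| + 1).
  by rewrite ln_ge0 //; have := normr_ge0 x0; lra.
have xb : x0 <= bk.
  have x1 : 0 < `|x0| + 1 by have := normr_ge0 x0; lra.
  have : `|x0| + 1 < bk by rewrite -ltr_ln ?posrE //; lra.
  by have := ler_norm x0; lra.
apply: le_trans (hq k (leq_trans K0K Kk) xb) _; rewrite -/bk.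
apply: le_trans (ler_wpM2r (powR_ge0 _ _) (ler_norm M)) _.
have L2 : 0 <= L / 2 by rewrite divr_ge0 ?(ltW L0).
rewrite /C -mulrA ler_wpM2l // -powRM //.
have kL1 : 0 < L / 2 * k%:R by rewrite mulrC.
have kL2 : L / 2 * k%:R <= ln bk by rewrite mulrC; lra.
rewrite !powRN lef_pV2 ?posrE ?powR_gt0 //; last lra.
by apply: ge0_ler_powR; rewrite ?nnegrE; lra.
Qed.

End TailSums.

Section Products.
Variable R : realType.

Lemma prod_ge_1_sub_sum (I : Type) (s : seq I) (p : I -> R) :
  (forall i, 0 <= p i <= 1) ->
  1 - \sum_(i <- s) (1 - p i) <= \prod_(i <- s) p i.
Proof.
move=> p01; elim: s => [|i s IH]; first by rewrite !big_nil subr0.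
rewrite !big_cons.
have S0 : 0 <= \sum_(j <- s) (1 - p j).
  by apply: sumr_ge0 => j _; have /andP[] := p01 j; lra.
have /andP[pi0 pi1] := p01 i.
nra.
Qed.

Lemma prod_ge_pow_half (p : nat -> R) (p0 : R) (K N : nat) :
  0 <= p0 -> (forall k, p0 <= p k <= 1) ->
  \sum_(K <= k < N) (1 - p k) <= 2^-1 -> p0 ^+ K / 2 <= \prod_(k < N) p k.
Proof.
move=> p00 hp hsum.
have p01 k : 0 <= p k <= 1.
  by have /andP[pk0 pk1] := hp k; rewrite pk1 andbT; lra.
have p0_1 : p0 <= 1 by have /andP[] := hp 0%N; lra.
have pow_le m n : p0 ^+ (n - m) <= \prod_(m <= k < n) p k.
  rewrite -prodr_const_nat; apply: ler_prod => k _.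
  by have /andP[] := hp k; lra.
have pK0 : 0 <= p0 ^+ K by rewrite exprn_ge0.
rewrite -(big_mkord xpredT).
have [KN|NK] := leqP K N.
  rewrite (big_cat_nat (leq0n K) KN) /=.
  have hA := pow_le 0%N K; rewrite subn0 in hA.
  have hB : 2^-1 <= \prod_(K <= k < N) p k.
    by have := prod_ge_1_sub_sum (index_iota K N) p01; lra.
  by apply: ler_pM => //; rewrite invr_ge0.
apply: le_trans (pow_le 0%N N); rewrite subn0.
have : p0 ^+ K <= p0 ^+ N by rewrite ler_wiXn2l // ltnW.
lra.
Qed.

End Products.

Section IIDEvents.
Context {d : measure_display} {T : measurableType d} {R : realType}.
Variable P : probability T R.

Lemma measurable_le_cst (f : T -> R) (c : R) : measurable_fun setT f ->
  measurable [set t | f t <= c].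
Proof.
by move=> mf; rewrite -preimage_itvNyc -[_ @^-1` _]setTI; exact: mf.
Qed.

Lemma measurable_forall_le (Q : pred nat) (f : nat -> T -> R) (b : nat -> R) :
  (forall n, measurable_fun setT (f n)) ->
  measurable [set t | forall n, Q n -> f n t <= b n].
Proof.
move=> mf.
rewrite (_ : [set t | _] = \bigcap_n [set t | Q n -> f n t <= b n]); last first.
  by apply/seteqP; split => t /= h n; [move=> _|]; exact: h.
apply: bigcapT_measurable => n; case: (Q n).
  rewrite (_ : [set t | true -> _] = [set t | f n t <= b n]).
    exact: measurable_le_cst.
  by apply/seteqP; split => t /=; auto.
by rewrite (_ : [set t | false -> _] = setT) //; apply/seteqP; split.
Qed.

Lemma measurable_fun_ar2 (a1 a2 : R) (Y : nat -> T -> R) n :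
  (forall k, measurable_fun setT (Y k)) ->
  measurable_fun setT (fun t => ar2 a1 a2 (Y ^~ t) n).
Proof.
move=> mY.
suff [] : measurable_fun setT (fun t => (ar2_aux a1 a2 (Y ^~ t) n).1) /\
          measurable_fun setT (fun t => (ar2_aux a1 a2 (Y ^~ t) n).2) by [].
elim: n => [|n [IH1 IH2]] /=; first by split; [exact: measurable_cst | exact: mY].
split => //; apply: measurable_realfun.measurable_funD; last exact: mY.
by apply: measurable_realfun.measurable_funD;
  apply: measurable_realfun.measurable_funM => //; exact: measurable_cst.
Qed.

Lemma prob_bigcap_cvg (F : (set T)^nat) : (forall n, measurable (F n)) ->
  nonincreasing_seq F -> P \o F @ \oo --> P (\bigcap_n F n).
Proof.
move=> mF hF; apply: nonincreasing_cvg_mu => //; last exact: bigcapT_measurable.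
by apply: le_lt_trans (probability_le1 P (mF 0%N)) _; rewrite ltry.
Qed.

Lemma pN_cvg (a1 a2 : R) (Y : nat -> T -> R) (x : R) :
  (forall k, measurable_fun setT (Y k)) ->
  pN P a1 a2 Y ^~ x @ \oo -->
    P [set t | forall n, (1 <= n)%N -> ar2 a1 a2 (Y ^~ t) n <= x].
Proof.
move=> mY.
pose F N := [set t | forall n, (1 <= n <= N)%N -> ar2 a1 a2 (Y ^~ t) n <= x].
have -> : [set t | forall n, (1 <= n)%N -> ar2 a1 a2 (Y ^~ t) n <= x] =
          \bigcap_N F N.
  apply/seteqP; split => t /= h.
    by move=> N _ n /andP[n1 _]; exact: h.
  by move=> n n1; apply: (h n I); rewrite n1 leqnn.
apply: prob_bigcap_cvg => [N|m n mn].
  exact: (measurable_forall_le (fun n => 1 <= n <= N)%N (fun=> x)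
    (fun n => measurable_fun_ar2 a1 a2 n mY)).
apply/subsetPset => t /= h k /andP[k1 kn]; apply: h.
by rewrite k1 (leq_trans kn mn).
Qed.

Lemma exists_prob_le_neg_gt0 (Z : T -> R) : measurable_fun setT Z ->
  (0 < P [set t | (Z t < 0)%R])%E ->
  exists2 dl : R, 0 < dl & (0 < P [set t | (Z t <= - dl)%R])%E.
Proof.
move=> mZ hneg; apply: contrapT => /forall2NP hnull; move: hneg.
pose G m := [set t | Z t <= - m.+1%:R^-1].
have mG m : measurable (G m) by exact: measurable_le_cst.
have hG : nondecreasing_seq G.
  move=> m n mn; apply/subsetPset => t /= /le_trans; apply.
  by rewrite lerN2 lef_pV2 ?posrE ?ltr0n // ler_nat ltnS.
have G0 m : P (G m) = 0%E.
  case: (hnull m.+1%:R^-1) => [|]; first by rewrite invr_gt0 ltr0n.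
  by move/negP; rewrite -leNgt => h; apply/eqP; rewrite eq_le h measure_ge0.
suff <- : \bigcup_m G m = [set t | (Z t < 0)%R].
  have := nondecreasing_cvg_mu (mu := P) mG (bigcupT_measurable _ mG) hG.
  rewrite (_ : P \o G = fun=> 0%E); last by apply/funext => m; exact: G0.
  by move/(cvg_unique (@ereal_hausdorff R) (cvg_cst _)) => <-; rewrite ltxx.
apply/seteqP; split => t /=.
  by case=> m _ /le_lt_trans; apply; rewrite oppr_lt0 invr_gt0 ltr0n.
move=> Zt0; exists (Num.truncn (- Z t)^-1) => //; rewrite /G /= lerNr.
rewrite -[X in _ <= X]invrK lef_pV2 ?posrE ?invr_gt0 ?oppr_gt0 //.
exact/ltW/truncnS_gt.
Qed.

Lemma iid_prob_forall_lt_le (Y : nat -> T -> R) (b : nat -> R) (N : nat) :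
  iid_rvs P Y ->
  P [set t | forall k, (k < N)%N -> Y k t <= b k] =
  (\prod_(k < N) fine (P [set t | Y 0%N t <= b k]))%:E.
Proof.
move=> [mY [indep ident]].
have := indep (index_iota 0 N) (fun k => [set` `]-oo, b k]]) (iota_uniq _ _)
  (fun k => measurable_itv _).
rewrite (_ : [set t | _] = [set t | forall k, (k < N)%N -> Y k t <= b k]).
  move=> ->; rewrite big_mkord -prodEFin; apply: eq_bigr => k _.
  rewrite ident ?fineK.
  - by congr (P _); apply/seteqP; split => t /=; rewrite in_itv.
  - by apply: fin_num_measure; exact: measurable_le_cst.
  - exact: measurable_itv.
apply/seteqP; split => t h k kN.
  by move: (h k); rewrite mem_index_iota /= in_itv /=; apply.
by rewrite mem_index_iota in kN; rewrite /= in_itv /=; exact: h.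
Qed.

Lemma one_sub_prob_le_ge (Z : T -> R) (c : R) : measurable_fun setT Z ->
  1 - fine (P [set t | Z t <= c]) <= fine (P [set t | c <= Z t]).
Proof.
move=> mZ; have mle := measurable_le_cst c mZ.
have mge : measurable [set t | c <= Z t].
  by rewrite -preimage_itvcy -[_ @^-1` _]setTI; exact: mZ.
have -> : 1 - fine (P [set t | Z t <= c]) = fine (P (~` [set t | Z t <= c])).
  by rewrite probability_setC // fineB ?fin_num_measure.
apply: fine_le; rewrite ?fin_num_measure //; first exact: measurableC.
apply: le_measure; rewrite ?inE //; first exact: measurableC.
by move=> t /= /negP; rewrite -ltNge => /ltW.
Qed.

Lemma iid_prob_forall_le_gt0 (Y : nat -> T -> R) (b : nat -> R) (c : R) K :
  iid_rvs P Y -> (0 < P [set t | (Y 0%N t <= c)%R])%E -> (forall k, c <= b k) ->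
  (forall N, \sum_(K <= k < N) (1 - fine (P [set t | Y 0%N t <= b k])) <= 2^-1) ->
  (0 < P (\bigcap_k [set t | (Y k t <= b k)%R]))%E.
Proof.
move=> iidY Pc cb hsum; have mY := iidY.1.
set p0 := fine (P [set t | Y 0%N t <= c]).
have mc := measurable_le_cst c (mY 0%N).
have p00 : 0 < p0.
  by rewrite fine_gt0 // Pc /= (le_lt_trans (probability_le1 P mc)) ?ltry.
have hp k : p0 <= fine (P [set t | Y 0%N t <= b k]) <= 1.
  have mk := measurable_le_cst (b k) (mY 0%N).
  rewrite -!lee_fin !fineK ?fin_num_measure // probability_le1 // andbT.
  by apply: le_measure; rewrite ?inE // => t /= /le_trans; apply.
pose E N := [set t | forall k, (k < N)%N -> Y k t <= b k].
have mE N : measurable (E N) by exact: measurable_forall_le.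
have lbE N : ((p0 ^+ K / 2)%:E <= P (E N))%E.
  rewrite iid_prob_forall_lt_le // lee_fin.
  exact: prod_ge_pow_half (ltW p00) hp _.
have hE : nonincreasing_seq E.
  move=> m n mn; apply/subsetPset => t /= h k kn; apply: h.
  exact: leq_trans kn mn.
have hc := prob_bigcap_cvg mE hE.
have -> : \bigcap_k [set t | Y k t <= b k] = \bigcap_N E N.
  apply/seteqP; split => t /= h; first by move=> N _ k _; exact: h.
  by move=> k _; apply: (h k.+1 I).
apply: (@lt_le_trans _ _ (p0 ^+ K / 2)%:E).
  by rewrite lte_fin divr_gt0 // exprn_gt0.
rewrite -(cvg_lim (@ereal_hausdorff R) hc).
by apply: lime_ge; [exact: cvgP hc | exact: nearW].
Qed.

End IIDEvents.

Theorem theorem1p3 (d : measure_display) (T : measurableType d) (R : realType)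
  (P : probability T R) (Y : nat -> T -> R) (a1 a2 : R) :
  iid_rvs P Y ->
  nondegenerate_rv P (Y 0%N) ->
  region_C a1 a2 ->
  (0 < P [set t | (Y 0%N t < 0)%R])%E ->
  (exists alpha : R, 1 < alpha /\
     exists M x0 : R, forall x : R, x0 <= x ->
       fine (P [set t | x <= Y 0%N t]) <= M * (ln x) `^ (- alpha)) ->
  forall x : R, 0 <= x ->
    (pN P a1 a2 Y ^~ x) @ \oo -->
      P [set t | forall n : nat, (1 <= n)%N -> ar2 a1 a2 (Y ^~ t) n <= x] /\
    (0 < P [set t | forall n : nat, (1 <= n)%N -> (ar2 a1 a2 (Y ^~ t) n <= x)%R])%E.
Proof.
move=> iidY _ hC hneg [al [al1 [M [x0 htail]]]] x x_ge0.
have mY := iidY.1.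
split; first exact: pN_cvg.
have [dl dl0 hdl] := exists_prob_le_neg_gt0 (mY 0%N) hneg.
have [eta [th [eta0 th1 nonpos]]] := ar2_le0_region_C hC dl0.
set b := ar2_envelope dl eta th.
have [K _ hK] : exists2 K, (2 <= K)%N & forall N,
    \sum_(K <= k < N) (1 - fine (P [set t | Y 0%N t <= b k])) <= 2^-1.
  apply: (tail_sum_log_small (M := M) (x0 := x0) eta0 th1 al1) => k k2 xk.
  apply: le_trans (htail _ xk).
  by rewrite /b /ar2_envelope ltnNge k2; exact: one_sub_prob_le_ge.
have hb k : - dl <= b k by apply: ar2_envelope_ge; lra.
apply: lt_le_trans (iid_prob_forall_le_gt0 iidY hdl hb hK) _.
apply: le_measure; rewrite ?inE.
- by apply: bigcapT_measurable => k; exact: measurable_le_cst.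
- exact: (measurable_forall_le _ (fun=> x)
    (fun n => measurable_fun_ar2 a1 a2 n mY)).
- by move=> t /= hY n n1; apply: le_trans x_ge0; apply: nonpos n1 => k; exact: hY.
Qed.
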